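(* Let $K^{\mathsf{m}},K^{\mathsf{v}}$ be positive-definite kernels on $\mathcal{X}$ with RKHSs $\mathcal{H}^{\mathsf{m}},\mathcal{H}^{\mathsf{v}}$ and feature maps $\phi^{\mathsf{m}}_x=K^{\mathsf{m}}(x,\cdot)$, $\phi^{\mathsf{v}}_x=K^{\mathsf{v}}(x,\cdot)$. Let $(x_i,y_i)\in\mathcal{X}\times\mathbb{R}$, $i=1,\dots,n$, let $\mathbf{K}^{\mathsf{m}},\mathbf{K}^{\mathsf{v}}\in\mathbb{S}^{n\times n}$ be the kernel matrices $\mathbf{K}^{\mathsf{m}}_{ij}=K^{\mathsf{m}}(x_i,x_j)$, $\mathbf{K}^{\mathsf{v}}_{ij}=K^{\mathsf{v}}(x_i,x_j)$, with $i$-th columns $\mathsf{K}^{\mathsf{m}}_i,\mathsf{K}^{\mathsf{v}}_i$, and let $\gamma\ge0$. Consider the finite-dimensional program $$(\mathrm{P}_n)\quad\min_{\alpha\in\mathbb{R}^n,\ \mathbf{B}\in\mathbb{S}^{n\times n}}\ \gamma\langle\alpha,\mathbf{K}^{\mathsf{m}}\alpha\rangle+\operatorname{Tr}(\mathbf{K}^{\mathsf{v}}\mathbf{B})\quad\text{s.t.}\quad\langle\mathsf{K}^{\mathsf{v}}_i,\mathbf{B}\mathsf{K}^{\mathsf{v}}_i\rangle\ge\big(y_i-\langle\mathsf{K}^{\mathsf{m}}_i,\alpha\rangle\big)^2\ \forall i,\ \ \mathbf{B}\succeq0,$$ and the infinite-dimensional program $$(\mathrm{P}_\infty)\quad\min_{\beta\in\mathcal{H}^{\mathsf{m}},\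 \mathbf{A}:\mathcal{H}^{\mathsf{v}}\to\mathcal{H}^{\mathsf{v}}}\ \gamma\|\beta\|^2_{\mathcal{H}^{\mathsf{m}}}+\|\mathbf{A}\|_\star\quad\text{s.t.}\quad\langle\phi^{\mathsf{v}}_{x_i},\mathbf{A}\phi^{\mathsf{v}}_{x_i}\rangle_{\mathcal{H}^{\mathsf{v}}}\ge\big(y_i-\langle\phi^{\mathsf{m}}_{x_i},\beta\rangle_{\mathcal{H}^{\mathsf{m}}}\big)^2\ \forall i,\ \ \mathbf{A}\succeq0.$$ Then the two programs are equivalent: they have the same optimal value, the map $(\alpha,\mathbf{B})\mapsto(\beta,\mathbf{A})$ with $\beta=\sum_i\alpha_i\phi^{\mathsf{m}}_{x_i}$ and $\mathbf{A}=\sum_{i,j}\mathbf{B}_{ij}\,\phi^{\mathsf{v}}_{x_i}\otimes\phi^{\mathsf{v}}_{x_j}$ sends feasible points of $(\mathrm{P}_n)$ to feasible points of $(\mathrm{P}_\infty)$ with the same objective value, and $(\mathrm{P}_\infty)$ has an optimal solution of this form (in particular optimal solutions of $(\mathrm{P}_n)$ are mapped to optimal solutions of $(\mathrm{P}_\infty)$).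
   Context: $\|\mathbf{A}\|_\star$ is the nuclear (trace) norm; for $\mathbf{A}\succeq0$ it equals $\operatorname{Tr}(\mathbf{A})$. For $u,v\in\mathcal{H}$, $u\otimes v$ denotes the rank-one operator $h\mapsto\langle v,h\rangle_{\mathcal{H}}u$. $\mathbf{A}\succeq0$ means $\mathbf{A}$ is a positive semi-definite (self-adjoint) operator. *)

From HB Require Import structures.
From mathcomp Require Import all_boot all_order all_algebra.
From mathcomp Require Import all_classical all_reals all_analysis.
Set Implicit Arguments. Unset Strict Implicit. Unset Printing Implicit Defensive.
Import Order.TTheory GRing.Theory Num.Theory.
Local Open Scope classical_set_scope.
Local Open Scope ring_scope.

Section Defs.
Variables (R : realType).

Definition pd_kernel (X : Type) (K : X -> X -> R) : Prop :=
  (forall x y, K x y = K y x) /\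
  (forall (m : nat) (z : 'I_m -> X) (c : 'I_m -> R),
      0 <= \sum_(i < m) \sum_(j < m) c i * c j * K (z i) (z j)).

Definition is_hilbert (H : completeNormedModType R) (ip : H -> H -> R) : Prop :=
  [/\ forall u v, ip u v = ip v u,
      forall (a : R) u v w, ip (a *: u + v) w = a * ip u w + ip v w
    & forall u, `|u| ^+ 2 = ip u u].

(** [H] (with inner product [ip]) is the reproducing kernel Hilbert space of
    [K] on [X], with feature map [phi x = K(x, .)]: the elements of [H] are
    functions [X -> R] (via the injective linear map [ev]), [phi x] is the
    function [K x], and the reproducing property holds. *)
Definition is_RKHS (X : Type) (K : X -> X -> R)
    (H : completeNormedModType R) (ip : H -> H -> R)
    (ev : H -> X -> R) (phi : X -> H) : Prop :=
  [/\ is_hilbert ip,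
      forall (a : R) u v, ev (a *: u + v) = (fun x => a * ev u x + ev v x),
      injective ev,
      forall x, ev (phi x) = K x
    & forall x f, ip (phi x) f = ev f x].

Definition bounded_linear_op (H : completeNormedModType R) (A : H -> H) : Prop :=
  (forall (a : R) u v, A (a *: u + v) = a *: A u + A v) /\ continuous A.

Definition psd_op (H : completeNormedModType R) (ip : H -> H -> R) (A : H -> H) : Prop :=
  (forall u v, ip (A u) v = ip u (A v)) /\ (forall u, 0 <= ip u (A u)).

Definition orthonormal (H : completeNormedModType R) (ip : H -> H -> R) (e : seq H) : Prop :=
  forall i j, (i < size e)%N -> (j < size e)%N ->
    ip (nth 0 e i) (nth 0 e j) = (i == j)%:R.

(** Trace of a positive semidefinite operator (= its nuclear norm), possibly
    [+oo]: the supremum over finite orthonormal families [e] of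
    [sum_k <e_k, A e_k>] (equivalently the sum of [<e, A e>] over any
    orthonormal basis). *)
Definition psd_trace (H : completeNormedModType R) (ip : H -> H -> R) (A : H -> H) : \bar R :=
  ereal_sup [set (\sum_(u <- e) ip u (A u))%:E | e in [set e | orthonormal ip e]].

Definition rank_one (H : completeNormedModType R) (ip : H -> H -> R) (u v : H) : H -> H :=
  fun h => ip v h *: u.

Definition dotv (n : nat) (u v : 'cV[R]_n) : R := \sum_(i < n) u i 0 * v i 0.

Definition kmat (X : Type) (K : X -> X -> R) (n : nat) (x : 'I_n -> X) : 'M[R]_n :=
  \matrix_(i, j) K (x i) (x j).

Definition psd_mx (n : nat) (B : 'M[R]_n) : Prop :=
  B^T = B /\ (forall v : 'cV[R]_n, 0 <= dotv v (B *m v)).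

Definition Pn_feasible (n : nat) (Km Kv : 'M[R]_n) (y : 'I_n -> R)
    (alpha : 'cV[R]_n) (B : 'M[R]_n) : Prop :=
  (forall i : 'I_n,
     dotv (col i Kv) (B *m col i Kv) >= (y i - dotv (col i Km) alpha) ^+ 2)
  /\ psd_mx B.

Definition Pn_obj (n : nat) (gamma : R) (Km Kv : 'M[R]_n)
    (alpha : 'cV[R]_n) (B : 'M[R]_n) : R :=
  gamma * dotv alpha (Km *m alpha) + \tr (Kv *m B).

Definition Pn_value (n : nat) (gamma : R) (Km Kv : 'M[R]_n) (y : 'I_n -> R) : \bar R :=
  ereal_inf [set (Pn_obj gamma Km Kv p.1 p.2)%:E |
              p in [set p : 'cV[R]_n * 'M[R]_n | Pn_feasible Km Kv y p.1 p.2]].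

Definition Pn_optimal (n : nat) (gamma : R) (Km Kv : 'M[R]_n) (y : 'I_n -> R)
    (alpha : 'cV[R]_n) (B : 'M[R]_n) : Prop :=
  Pn_feasible Km Kv y alpha B /\
  (forall alpha' B', Pn_feasible Km Kv y alpha' B' ->
     Pn_obj gamma Km Kv alpha B <= Pn_obj gamma Km Kv alpha' B').

Definition Pinf_feasible (X : Type) (Hm Hv : completeNormedModType R)
    (ipm : Hm -> Hm -> R) (ipv : Hv -> Hv -> R)
    (phim : X -> Hm) (phiv : X -> Hv) (n : nat) (x : 'I_n -> X) (y : 'I_n -> R)
    (beta : Hm) (A : Hv -> Hv) : Prop :=
  [/\ bounded_linear_op A,
      forall i : 'I_n,
        ipv (phiv (x i)) (A (phiv (x i))) >= (y i - ipm (phim (x i)) beta) ^+ 2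
    & psd_op ipv A].

Definition Pinf_obj (Hm Hv : completeNormedModType R)
    (ipm : Hm -> Hm -> R) (ipv : Hv -> Hv -> R) (gamma : R)
    (beta : Hm) (A : Hv -> Hv) : \bar R :=
  (gamma * ipm beta beta)%:E + psd_trace ipv A.

Definition Pinf_value (X : Type) (Hm Hv : completeNormedModType R)
    (ipm : Hm -> Hm -> R) (ipv : Hv -> Hv -> R)
    (phim : X -> Hm) (phiv : X -> Hv) (n : nat) (x : 'I_n -> X) (y : 'I_n -> R)
    (gamma : R) : \bar R :=
  ereal_inf [set Pinf_obj ipm ipv gamma p.1 p.2 |
              p in [set p : Hm * (Hv -> Hv) |
                     Pinf_feasible ipm ipv phim phiv x y p.1 p.2]].

Definition Pinf_optimal (X : Type) (Hm Hv : completeNormedModType R)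
    (ipm : Hm -> Hm -> R) (ipv : Hv -> Hv -> R)
    (phim : X -> Hm) (phiv : X -> Hv) (n : nat) (x : 'I_n -> X) (y : 'I_n -> R)
    (gamma : R) (beta : Hm) (A : Hv -> Hv) : Prop :=
  Pinf_feasible ipm ipv phim phiv x y beta A /\
  (forall beta' A', Pinf_feasible ipm ipv phim phiv x y beta' A' ->
     (Pinf_obj ipm ipv gamma beta A <= Pinf_obj ipm ipv gamma beta' A')%E).

Definition map_beta (X : Type) (Hm : completeNormedModType R) (phim : X -> Hm)
    (n : nat) (x : 'I_n -> X) (alpha : 'cV[R]_n) : Hm :=
  \sum_(i < n) alpha i 0 *: phim (x i).

Definition map_A (X : Type) (Hv : completeNormedModType R) (ipv : Hv -> Hv -> R)
    (phiv : X -> Hv) (n : nat) (x : 'I_n -> X) (B : 'M[R]_n) : Hv -> Hv :=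
  fun h => \sum_(i < n) \sum_(j < n) B i j *: rank_one ipv (phiv (x i)) (phiv (x j)) h.

End Defs.

From Pilot Require Import Defs.
From HB Require Import structures.
From mathcomp Require Import all_boot all_order all_algebra.
From mathcomp Require Import all_classical all_reals all_analysis.
From mathcomp Require Import ring.
Import Order.TTheory GRing.Theory Num.Theory.
Local Open Scope classical_set_scope.
Local Open Scope ring_scope.
Set Implicit Arguments. Unset Strict Implicit. Unset Printing Implicit Defensive.

(** Both programs see the points only through the feature vectors
    [phi(x_i)].  The map [(alpha, B) |-> (beta, A)] keeps the constraint values,
    and the trace of [sum_ij B_ij phi(x_i) (x) phi(x_j)] is [Tr (K B)].
    Conversely, replacing [beta] by its orthogonal projection [P beta] onto
    [span {phi^m(x_i)}] and [A] by the compression [P A P] onto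
    [span {phi^v(x_i)}] keeps the constraints, does not increase the objective
    (Bessel's inequality, and the trace of [P A P] is a partial trace of [A]),
    and lands in the image of the map. *)

Section DotProduct.
Variable R : realType.

Lemma dotvC n (u v : 'cV[R]_n) : dotv u v = dotv v u.
Proof. by apply: eq_bigr => i _; rewrite mulrC. Qed.

Lemma dotv_mulmx m n (M : 'M[R]_(m, n)) (u : 'cV_m) (v : 'cV_n) :
  dotv u (M *m v) = dotv (M^T *m u) v.
Proof.
rewrite /dotv; under eq_bigr do rewrite mxE mulr_sumr.
rewrite exchange_big; apply: eq_bigr => j _; rewrite mxE mulr_suml.
by apply: eq_bigr => i _; rewrite mxE; ring.
Qed.

Lemma psd_mx_congr m n (M : 'M[R]_(m, n)) (C : 'M[R]_m) :
  psd_mx C -> psd_mx (M^T *m C *m M).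
Proof.
case=> CT C_ge0; split=> [|v]; first by rewrite !trmx_mul trmxK CT mulmxA.
by rewrite -!mulmxA dotv_mulmx trmxK.
Qed.

End DotProduct.

Section InnerProduct.
Variables (R : realType) (H : completeNormedModType R) (ip : H -> H -> R).
Hypothesis hH : is_hilbert ip.

Lemma ipC u v : ip u v = ip v u. Proof. by case: hH. Qed.
Lemma norm2_ip u : `|u| ^+ 2 = ip u u. Proof. by case: hH. Qed.
Lemma ipDl u v w : ip (u + v) w = ip u w + ip v w.
Proof. by case: hH => _ /(_ 1 u v w); rewrite scale1r mul1r. Qed.
Lemma ip0l w : ip 0 w = 0.
Proof. by apply: (addrI (ip 0 w)); rewrite -ipDl !addr0. Qed.
Lemma ipZl a u w : ip (a *: u) w = a * ip u w.
Proof. by case: hH => _ /(_ a u 0 w); rewrite addr0 ip0l addr0. Qed.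
Lemma ipNl u w : ip (- u) w = - ip u w.
Proof. by rewrite -scaleN1r ipZl mulN1r. Qed.
Lemma ipBl u v w : ip (u - v) w = ip u w - ip v w.
Proof. by rewrite ipDl ipNl. Qed.
Lemma ip_suml (I : Type) (r : seq I) (P : pred I) (F : I -> H) w :
  ip (\sum_(i <- r | P i) F i) w = \sum_(i <- r | P i) ip (F i) w.
Proof. by elim/big_rec2: _ => [|i y1 y2 _ <-]; rewrite ?ip0l ?ipDl. Qed.

Lemma ipDr u v w : ip w (u + v) = ip w u + ip w v.
Proof. by rewrite ipC ipDl !(ipC w). Qed.
Lemma ipZr a u w : ip w (a *: u) = a * ip w u.
Proof. by rewrite ipC ipZl ipC. Qed.
Lemma ipNr u w : ip w (- u) = - ip w u.
Proof. by rewrite ipC ipNl ipC. Qed.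
Lemma ipBr u v w : ip w (u - v) = ip w u - ip w v.
Proof. by rewrite ipDr ipNr. Qed.
Lemma ip_sumr (I : Type) (r : seq I) (P : pred I) (F : I -> H) w :
  ip w (\sum_(i <- r | P i) F i) = \sum_(i <- r | P i) ip w (F i).
Proof. by rewrite ipC ip_suml; apply: eq_bigr => i _; rewrite ipC. Qed.

Lemma ip_self_ge0 u : 0 <= ip u u.
Proof. by rewrite -norm2_ip exprn_ge0. Qed.
Lemma ip_self_eq0 u : (ip u u == 0) = (u == 0).
Proof. by rewrite -norm2_ip sqrf_eq0 normr_eq0. Qed.

Lemma ip_continuous v : continuous (ip v : H -> R^o).
Proof.
have norm2_cont (f : H -> H) : continuous f -> continuous (fun h => `|f h| ^+ 2 : R^o).
  move=> cf h; have nf : {for h, continuous (fun h => `|f h| : R^o)}.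
    by apply: continuous_comp (cf h) _; exact: norm_continuous.
  exact: (continuousM nf nf).
(* Polarization writes [ip v] through squared norms, which are continuous. *)
have -> : (ip v : H -> R^o) = fun h => 4^-1 * (`|v + h| ^+ 2 - `|v - h| ^+ 2).
  by apply: funext => h; rewrite !norm2_ip !ipDl !ipDr !ipNl !ipNr (ipC h v); field.
move=> h; apply: (@continuousM _ _ (fun=> 4^-1) (fun h => `|v + h| ^+ 2 - `|v - h| ^+ 2)).
  exact: (@cst_continuous _ R^o _ h).
apply: continuousB; apply: norm2_cont => z.
  exact: continuousD (cvg_cst _) cvg_id.
exact: continuousB (cvg_cst _) cvg_id.
Qed.

Lemma ip_ext u v : (forall z, ip z u = ip z v) -> u = v.
Proof. by move=> uv; apply/eqP; rewrite -subr_eq0 -ip_self_eq0 ipBr uv subrr. Qed.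

Definition gram_mx n (w : 'I_n -> H) : 'M[R]_n := \matrix_(i, j) ip (w i) (w j).

Definition ip_col n (w : 'I_n -> H) (h : H) : 'cV[R]_n := \col_i ip (w i) h.

Lemma ip_col_gram n (w : 'I_n -> H) k : ip_col w (w k) = col k (gram_mx w).
Proof. by apply/matrixP => i j; rewrite !mxE. Qed.

Lemma ip_col_lincomb m n (f : 'I_m -> H) (w : 'I_n -> H) (M : 'M[R]_(m, n)) h :
  (forall l, f l = \sum_i M l i *: w i) -> ip_col f h = M *m ip_col w h.
Proof.
move=> fM; apply/matrixP => l j; rewrite !mxE fM ip_suml.
by apply: eq_bigr => i _; rewrite ipZl mxE.
Qed.

Definition op_mx n (w : 'I_n -> H) (A : H -> H) : 'M[R]_n := \matrix_(i, j) ip (w i) (A (w j)).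

Section LinearOperator.
Variable A : H -> H.
Hypothesis A_lin : linear A.

Lemma ip_lincomb_op n (w : 'I_n -> H) (a b : 'cV[R]_n) :
  ip (\sum_i a i 0 *: w i) (A (\sum_j b j 0 *: w j)) = dotv a (op_mx w A *m b).
Proof.
have A0 : A 0 = 0 by have := A_lin (-1) 0 0; rewrite scaler0 addr0 scaleN1r addNr.
have AD u v : A (u + v) = A u + A v by have := A_lin 1 u v; rewrite !scale1r.
have AZ c u : A (c *: u) = c *: A u by have := A_lin c u 0; rewrite addr0 A0 addr0.
rewrite ip_suml /dotv; apply: eq_bigr => i _; rewrite ipZl mxE (big_morph A AD A0) ip_sumr.
by rewrite !mulr_sumr; apply: eq_bigr => j _; rewrite AZ ipZr mxE; ring.
Qed.

Lemma op_mx_psd n (w : 'I_n -> H) : psd_op ip A -> psd_mx (op_mx w A).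
Proof.
case=> A_sym A_ge0; split=> [|a].
  by apply/matrixP => i j; rewrite !mxE ipC A_sym.
by rewrite -ip_lincomb_op.
Qed.

End LinearOperator.

Definition oproj (e : seq H) (h : H) : H := \sum_(u <- e) ip u h *: u.

Lemma oprojE e h :
  oproj e h = \sum_l ip (tnth (in_tuple e) l) h *: tnth (in_tuple e) l.
Proof. exact: big_tnth. Qed.

Lemma oproj_rcons e g h : oproj (rcons e g) h = oproj e h + ip g h *: g.
Proof. by rewrite /oproj big_rcons. Qed.

Lemma ip_oprojl e a b : ip (oproj e a) b = \sum_(u <- e) ip u a * ip u b.
Proof. by rewrite ip_suml; apply: eq_bigr => u _; rewrite ipZl. Qed.

Lemma ip_oprojC e a b : ip a (oproj e b) = ip (oproj e a) b.
Proof. by rewrite ipC !ip_oprojl; apply: eq_bigr => u _; rewrite mulrC. Qed.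

Section Orthonormal.
Variable e : seq H.
Hypothesis e_on : Defs.orthonormal ip e.

Lemma ip_mem_oproj u h : u \in e -> ip u (oproj e h) = ip u h.
Proof.
case/(tnthP (in_tuple e)) => l ->; rewrite ip_oprojC oprojE ip_suml.
rewrite (bigD1 l) //= big1 => [|l' /negPf].
  by rewrite ipZl !(tnth_nth 0) e_on // eqxx mul1r addr0.
by rewrite -val_eqE ipZl !(tnth_nth 0) e_on //= => ->; rewrite mul0r.
Qed.

Lemma oproj_mem u : u \in e -> oproj e u = u.
Proof. by move=> ue; apply: ip_ext => z; rewrite ip_oprojC ipC ip_mem_oproj // ipC. Qed.

Lemma ip_oproj_oproj a b : ip (oproj e a) (oproj e b) = ip (oproj e a) b.
Proof. by rewrite !ip_oprojl; apply: eq_big_seq => u ue; rewrite ip_mem_oproj. Qed.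

Lemma ip_oproj_split a b :
  ip a b = ip (oproj e a) (oproj e b) + ip (a - oproj e a) (b - oproj e b).
Proof.
by rewrite ipBl !ipBr !ip_oproj_oproj ip_oprojC; ring.
Qed.

Lemma ip_oproj_le h : ip (oproj e h) (oproj e h) <= ip h h.
Proof. by rewrite [leRHS](ip_oproj_split h h) lerDl ip_self_ge0. Qed.

Lemma orthonormal_rcons g : ip g g = 1 -> {in e, forall u, ip u g = 0} ->
  Defs.orthonormal ip (rcons e g).
Proof.
move=> gg g_orth i j; rewrite size_rcons !ltnS !nth_rcons.
rewrite leq_eqVlt => /predU1P [-> | ie]; rewrite leq_eqVlt => /predU1P [-> | je].
- by rewrite ltnn eqxx gg.
- by rewrite ltnn eqxx je ipC g_orth ?mem_nth // gtn_eqF.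
- by rewrite ltnn eqxx ie g_orth ?mem_nth // ltn_eqF.
- by rewrite ie je e_on.
Qed.

End Orthonormal.

Definition lin_span n (w : 'I_n -> H) : set H :=
  [set u | exists c : 'I_n -> R, u = \sum_i c i *: w i].

Section LinearSpan.
Variables (n : nat) (w : 'I_n -> H).

Lemma lin_span_gen i : lin_span w (w i).
Proof.
exists (fun j => (j == i)%:R); rewrite (bigD1 i) //= eqxx scale1r big1 ?addr0 //.
by move=> j /negPf ->; rewrite scale0r.
Qed.

Lemma lin_spanZ a u : lin_span w u -> lin_span w (a *: u).
Proof.
move=> [c ->]; exists (fun i => a * c i).
by rewrite scaler_sumr; apply: eq_bigr => i _; rewrite scalerA.
Qed.

Lemma lin_spanD u v : lin_span w u -> lin_span w v -> lin_span w (u + v).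
Proof.
move=> [c ->] [d ->]; exists (fun i => c i + d i).
by rewrite -big_split; apply: eq_bigr => i _; rewrite scalerDl.
Qed.

Lemma lin_spanB u v : lin_span w u -> lin_span w v -> lin_span w (u - v).
Proof. by move=> su sv; rewrite -scaleN1r; apply/lin_spanD/lin_spanZ. Qed.

Lemma lin_span_oproj e h : {in e, forall u, lin_span w u} -> lin_span w (oproj e h).
Proof.
move=> e_span; rewrite /oproj big_seq; elim/big_ind: _ => [||u ue].
- by exists (fun=> 0); rewrite big1 // => i _; rewrite scale0r.
- exact: lin_spanD.
- exact/lin_spanZ/e_span.
Qed.

End LinearSpan.

Lemma gram_schmidt_step e v : Defs.orthonormal ip e -> v - oproj e v != 0 ->
  let g := `|v - oproj e v|^-1 *: (v - oproj e v) in
  [/\ Defs.orthonormal ip (rcons e g), oproj (rcons e g) v = v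
    & forall h, oproj e h = h -> oproj (rcons e g) h = h].
Proof.
move=> e_on; set s := v - oproj e v => s_neq0 g.
have s_pos : `|s| != 0 by rewrite normr_eq0.
have gs : ip g s = `|s| by rewrite ipZl -norm2_ip expr2 mulrA mulVf ?mul1r.
have g_orth : {in e, forall u, ip u g = 0}.
  by move=> u ue; rewrite ipZr ipBr ip_mem_oproj // subrr mulr0.
have g_oproj h : ip g (oproj e h) = 0.
  by rewrite ipC ip_oprojl big_seq big1 // => u ue; rewrite g_orth ?mulr0.
split.
- apply: orthonormal_rcons => //.
  by rewrite ipZr gs mulVf.
- by rewrite oproj_rcons -{2}(subrKC (oproj e v) v) ipDr g_oproj add0r -/s gs
    scalerA mulfV // scale1r subrKC.
- by move=> h hh; rewrite oproj_rcons -{2}hh g_oproj scale0r addr0 hh.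
Qed.

Lemma gram_schmidt n (w : 'I_n -> H) : exists e : seq H,
  [/\ Defs.orthonormal ip e, {in e, forall u, lin_span w u} & forall i, oproj e (w i) = w i].
Proof.
suff [e [e_on e_span e_fix]] : exists e : seq H, [/\ Defs.orthonormal ip e,
    {in e, forall u, lin_span w u} & {in codom w, forall v, oproj e v = v}].
  by exists e; split=> // i; apply/e_fix/codom_f.
have : {in codom w, forall v, lin_span w v} by move=> _ /codomP [i ->]; exact: lin_span_gen.
elim: (codom w) => [|v vs IH] vs_span; first by exists [::].
have [e [e_on e_span e_fix]] := IH (fun u uvs => vs_span u (@mem_behead _ (v :: vs) u uvs)).
have v_span : lin_span w v := vs_span v (mem_head v vs).
have [v_fix | s_neq0] := eqVneq (v - oproj e v) 0.
  exists e; split=> // u; rewrite in_cons => /predU1P [-> | /e_fix //].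
  by apply/eqP; rewrite eq_sym -subr_eq0 v_fix.
have [on_eg eg_v eg_fix] := gram_schmidt_step e_on s_neq0.
exists (rcons e (`|v - oproj e v|^-1 *: (v - oproj e v))); split => //.
- move=> u; rewrite mem_rcons in_cons => /predU1P [-> | /e_span //].
  exact/lin_spanZ/lin_spanB/lin_span_oproj.
- by move=> u; rewrite in_cons => /predU1P [-> // | /e_fix /eg_fix].
Qed.

Lemma mxtrace_gram_oproj n (w : 'I_n -> H) e (B : 'M[R]_n) : Defs.orthonormal ip e ->
  \tr (gram_mx (fun i => oproj e (w i)) *m B) =
  \sum_(u <- e) dotv (ip_col w u) (B *m ip_col w u).
Proof.
move=> e_on; rewrite /mxtrace; under eq_bigr => i _ do rewrite mxE.
under eq_bigr => i _ do under eq_bigr => j _ do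
  rewrite mxE ip_oproj_oproj // ip_oprojl mulr_suml.
under eq_bigr => i _ do rewrite exchange_big.
rewrite exchange_big; apply: eq_bigr => u _; rewrite exchange_big.
apply: eq_bigr => j _ /=; rewrite !mxE mulr_sumr; apply: eq_bigr => i _.
by rewrite !mxE !(ipC u); ring.
Qed.

Lemma mxtrace_gram_ge0 n (w : 'I_n -> H) (B : 'M[R]_n) :
  psd_mx B -> 0 <= \tr (gram_mx w *m B).
Proof.
move=> [_ B_ge0]; have [e [e_on _ e_fix]] := gram_schmidt w.
have -> : w = fun i => oproj e (w i) by apply: funext => i; rewrite e_fix.
by rewrite mxtrace_gram_oproj //; apply: sumr_ge0 => u _.
Qed.

Section FeatureMap.
Variables (X : Type) (phi : X -> H) (n : nat) (x : 'I_n -> X).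

Local Notation w := (fun i => phi (x i)).

Lemma ip_map_beta z alpha : ip z (map_beta phi x alpha) = dotv (ip_col w z) alpha.
Proof. by rewrite ip_sumr; apply: eq_bigr => i _; rewrite ipZr mxE ipC mulrC. Qed.

Lemma ip_col_map_beta alpha : ip_col w (map_beta phi x alpha) = gram_mx w *m alpha.
Proof.
apply/matrixP => i j; rewrite !mxE ip_sumr (ord1 j).
by apply: eq_bigr => k _; rewrite ipZr mxE mulrC.
Qed.

Lemma map_AE B h :
  map_A ip phi x B h = \sum_i \sum_j (B i j * ip (phi (x j)) h) *: phi (x i).
Proof. by apply: eq_bigr => i _; apply: eq_bigr => j _; rewrite scalerA. Qed.

Lemma ip_map_A z B h :
  ip z (map_A ip phi x B h) = dotv (ip_col w z) (B *m ip_col w h).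
Proof.
rewrite map_AE ip_sumr; apply: eq_bigr => i _; rewrite ip_sumr !mxE mulr_sumr.
by apply: eq_bigr => j _; rewrite ipZr !mxE (ipC z); ring.
Qed.

Lemma map_A_bounded_linear B : bounded_linear_op (map_A ip phi x B).
Proof.
split=> [a u v | ].
  rewrite !map_AE scaler_sumr -big_split; apply: eq_bigr => i _.
  rewrite scaler_sumr -big_split; apply: eq_bigr => j _ /=.
  by rewrite ipDr ipZr scalerA -scalerDl; congr (_ *: _); ring.
have -> : map_A ip phi x B = fun h => \sum_i \sum_j ip (phi (x j)) h *: (B i j *: phi (x i)).
  by apply: funext => h; rewrite map_AE; do 2!apply: eq_bigr => ? _; rewrite scalerA mulrC.
apply: continuous_big => [|i _]; first exact: add_continuous.
apply: continuous_big => [|j _ h]; first exact: add_continuous.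
exact/continuousZr_tmp/ip_continuous.
Qed.

Lemma map_A_psd B : psd_mx B -> psd_op ip (map_A ip phi x B).
Proof.
case=> BT B_ge0; split=> [u v | u]; last by rewrite ip_map_A.
by rewrite ipC !ip_map_A dotv_mulmx BT dotvC.
Qed.

Lemma sum_ip_map_A e B : Defs.orthonormal ip e ->
  \sum_(u <- e) ip u (map_A ip phi x B u) = \tr (gram_mx (fun i => oproj e (w i)) *m B).
Proof. by move=> e_on; rewrite mxtrace_gram_oproj //; apply: eq_bigr => u _; rewrite ip_map_A. Qed.

Lemma psd_trace_map_A B : psd_mx B ->
  psd_trace ip (map_A ip phi x B) = (\tr (gram_mx w *m B))%:E.
Proof.
move=> B_psd; apply/eqP; rewrite eq_le; apply/andP; split.
  apply: ge_ereal_sup => _ [e e_on <-]; rewrite lee_fin sum_ip_map_A //.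
  (* Pythagoras: what [e] misses is a Gram matrix of residuals, on which [B] is nonnegative. *)
  have -> : gram_mx w = gram_mx (fun i => oproj e (w i)) +
                        gram_mx (fun i => w i - oproj e (w i)).
    by apply/matrixP => i j; rewrite !mxE -ip_oproj_split.
  by rewrite mulmxDl mxtraceD lerDl mxtrace_gram_ge0.
have [e [e_on _ e_fix]] := gram_schmidt w.
apply: ereal_sup_ubound; exists e => //; rewrite sum_ip_map_A //.
by congr (_ %:E); congr (\tr (gram_mx _ *m _)); apply: funext => i; rewrite e_fix.
Qed.

Lemma exists_map_beta_projection beta : exists (alpha : 'cV[R]_n),
  (forall k, ip (w k) (map_beta phi x alpha) = ip (w k) beta) /\
  ip (map_beta phi x alpha) (map_beta phi x alpha) <= ip beta beta.
Proof.
have [e [e_on e_span e_fix]] := gram_schmidt w.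
have [c Pc] := lin_span_oproj beta e_span.
exists (\col_i c i).
have -> : map_beta phi x (\col_i c i) = oproj e beta.
  by rewrite Pc; apply: eq_bigr => i _; rewrite mxE.
by split=> [k|]; [rewrite ip_oprojC e_fix | exact: ip_oproj_le].
Qed.

Lemma map_A_compressionE (A : H -> H) e (M : 'M[R]_(size e, n)) : linear A ->
  (forall l, tnth (in_tuple e) l = \sum_i M l i *: w i) ->
  map_A ip phi x (M^T *m op_mx (tnth (in_tuple e)) A *m M) =
  fun h => oproj e (A (oproj e h)).
Proof.
move=> A_lin eM; apply: funext => h; apply: ip_ext => z.
have oprojM u : oproj e u = \sum_l ip_col (tnth (in_tuple e)) u l 0 *: tnth (in_tuple e) l.
  by rewrite oprojE; apply: eq_bigr => l _; rewrite mxE.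
rewrite ip_map_A ip_oprojC !oprojM ip_lincomb_op // !(ip_col_lincomb _ eM).
by rewrite -!mulmxA dotv_mulmx trmxK.
Qed.

Lemma exists_map_A_compression A : bounded_linear_op A -> psd_op ip A ->
  exists (B : 'M[R]_n), [/\ psd_mx B,
    forall k, ip (w k) (map_A ip phi x B (w k)) = ip (w k) (A (w k))
  & ((\tr (gram_mx w *m B))%:E <= psd_trace ip A)%E].
Proof.
case=> A_lin _ A_psd; have [e [e_on e_span e_fix]] := gram_schmidt w.
have [M eM] : exists M : 'M[R]_(size e, n),
    forall l, tnth (in_tuple e) l = \sum_i M l i *: w i.
  have /choice [c ec] : forall l : 'I_(size e),
      exists c : 'I_n -> R, tnth (in_tuple e) l = \sum_i c i *: w i.
    by move=> l; apply/e_span/mem_tnth.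
  by exists (\matrix_(l, i) c l i) => l; rewrite ec; apply: eq_bigr => i _; rewrite mxE.
exists (M^T *m op_mx (tnth (in_tuple e)) A *m M).
have PAP := map_A_compressionE A_lin eM.
split=> [|k|]; first exact/psd_mx_congr/op_mx_psd.
  by rewrite PAP ip_oprojC e_fix.
have -> : gram_mx w = gram_mx (fun i => oproj e (w i)).
  by congr gram_mx; apply: funext => i; rewrite e_fix.
rewrite -sum_ip_map_A // PAP.
apply: ereal_sup_ubound; exists e => //; congr (_ %:E); apply: eq_big_seq => u ue.
by rewrite ip_oprojC oproj_mem.
Qed.

End FeatureMap.

End InnerProduct.

Lemma kmat_RKHS (R : realType) (X : Type) (K : X -> X -> R) (H : completeNormedModType R)
    (ip : H -> H -> R) (ev : H -> X -> R) (phi : X -> H) n (x : 'I_n -> X) :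
  is_RKHS K ip ev phi -> kmat K x = gram_mx ip (fun i => phi (x i)).
Proof.
by case=> hH _ _ ev_phi reprod; apply/matrixP => i j; rewrite !mxE (ipC hH) reprod ev_phi.
Qed.

Section Programs.
Variables (R : realType) (X : Type) (Hm Hv : completeNormedModType R).
Variables (ipm : Hm -> Hm -> R) (ipv : Hv -> Hv -> R).
Hypotheses (hm : is_hilbert ipm) (hv : is_hilbert ipv).
Variables (phim : X -> Hm) (phiv : X -> Hv) (n : nat) (x : 'I_n -> X) (y : 'I_n -> R).
Variable gamma : R.
Hypothesis gamma_ge0 : 0 <= gamma.

Local Notation Gm := (gram_mx ipm (fun i => phim (x i))).
Local Notation Gv := (gram_mx ipv (fun i => phiv (x i))).
Local Notation feasible_n := (Pn_feasible Gm Gv y).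
Local Notation feasible_inf := (Pinf_feasible ipm ipv phim phiv x y).
Local Notation obj_n := (Pn_obj gamma Gm Gv).
Local Notation obj_inf := (Pinf_obj ipm ipv gamma).

Lemma Pn_to_Pinf alpha B : feasible_n alpha B ->
  feasible_inf (map_beta phim x alpha) (map_A ipv phiv x B) /\
  obj_inf (map_beta phim x alpha) (map_A ipv phiv x B) = (obj_n alpha B)%:E.
Proof.
case=> y_le B_psd; split.
  split=> [|i|]; [exact: map_A_bounded_linear | | exact: map_A_psd].
  by rewrite (ip_map_A hv) (ip_map_beta hm) !ip_col_gram; exact: y_le.
rewrite /Pinf_obj (psd_trace_map_A hv) // (ip_map_beta hm) (ip_col_map_beta hm).
by rewrite dotvC EFinD.
Qed.

Lemma Pinf_to_Pn beta A : feasible_inf beta A ->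
  exists alpha B, feasible_n alpha B /\ ((obj_n alpha B)%:E <= obj_inf beta A)%E.
Proof.
case=> A_bl y_le A_psd.
have [alpha [alpha_eq alpha_le]] := exists_map_beta_projection hm phim x beta.
have [B [B_psd B_eq B_le]] := exists_map_A_compression hv phiv x A_bl A_psd.
exists alpha, B; split.
  split=> // i; rewrite -!ip_col_gram -(ip_map_beta hm) alpha_eq -(ip_map_A hv) B_eq.
  exact: y_le.
rewrite EFinD leeD // lee_fin ler_wpM2l // dotvC -(ip_col_map_beta hm) -(ip_map_beta hm).
exact: alpha_le.
Qed.

Lemma Pn_optimal_to_Pinf alpha B : Pn_optimal gamma Gm Gv y alpha B ->
  Pinf_optimal ipm ipv phim phiv x y gamma (map_beta phim x alpha) (map_A ipv phiv x B).
Proof.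
case=> /Pn_to_Pinf [feas obj] opt; split=> // beta A /Pinf_to_Pn [alpha' [B' [feas' le']]].
by rewrite obj; apply: le_trans le'; rewrite lee_fin opt.
Qed.

Lemma Pinf_optimal_to_Pn beta A : Pinf_optimal ipm ipv phim phiv x y gamma beta A ->
  exists alpha B, Pn_optimal gamma Gm Gv y alpha B.
Proof.
case=> /Pinf_to_Pn [alpha [B [feas le]]] opt; exists alpha, B; split=> // alpha' B'.
by case/Pn_to_Pinf => feas' obj'; rewrite -lee_fin -obj'; apply: le_trans le _; exact: opt.
Qed.

Lemma Pn_Pinf_value : Pn_value gamma Gm Gv y = Pinf_value ipm ipv phim phiv x y gamma.
Proof.
apply/eqP; rewrite eq_le; apply/andP; split.
  apply: le_ereal_inf_tmp => _ [[beta A] /Pinf_to_Pn [alpha [B [feas le]]] <-].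
  by apply: le_trans le; apply: ereal_inf_lbound; exists (alpha, B).
apply: le_ereal_inf_tmp => _ [[alpha B] /Pn_to_Pinf [feas obj] <-].
by rewrite -obj; apply: ereal_inf_lbound; exists (map_beta phim x alpha, map_A ipv phiv x B).
Qed.

End Programs.

Unset Implicit Arguments. Set Strict Implicit. Set Printing Implicit Defensive.

Theorem mainTheorem3 (R : realType) (X : Type)
  (Km Kv : X -> X -> R)
  (Hm Hv : completeNormedModType R)
  (ipm : Hm -> Hm -> R) (ipv : Hv -> Hv -> R)
  (evm : Hm -> X -> R) (evv : Hv -> X -> R)
  (phim : X -> Hm) (phiv : X -> Hv)
  (n : nat) (x : 'I_n -> X) (y : 'I_n -> R) (gamma : R) :
  pd_kernel Km -> pd_kernel Kv ->
  is_RKHS Km ipm evm phim -> is_RKHS Kv ipv evv phiv ->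
  0 <= gamma ->
  let KKm := kmat Km x in
  let KKv := kmat Kv x in
  [/\ Pn_value gamma KKm KKv y = Pinf_value ipm ipv phim phiv x y gamma,
      (forall (alpha : 'cV[R]_n) (B : 'M[R]_n),
         Pn_feasible KKm KKv y alpha B ->
         Pinf_feasible ipm ipv phim phiv x y
           (map_beta phim x alpha) (map_A ipv phiv x B) /\
         Pinf_obj ipm ipv gamma (map_beta phim x alpha) (map_A ipv phiv x B)
           = (Pn_obj gamma KKm KKv alpha B)%:E),
      (forall (alpha : 'cV[R]_n) (B : 'M[R]_n),
         Pn_optimal gamma KKm KKv y alpha B ->
         Pinf_optimal ipm ipv phim phiv x y gamma
           (map_beta phim x alpha) (map_A ipv phiv x B))
    & ((exists (beta : Hm) (A : Hv -> Hv),
          Pinf_optimal ipm ipv phim phiv x y gamma beta A) ->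
       exists (alpha : 'cV[R]_n) (B : 'M[R]_n),
         Pn_optimal gamma KKm KKv y alpha B /\
         Pinf_optimal ipm ipv phim phiv x y gamma
           (map_beta phim x alpha) (map_A ipv phiv x B))].
Proof.
(* Positive definiteness of the kernels already follows from the RKHS structure. *)
move=> _ _ RKm RKv gamma_ge0 KKm KKv.
have [hm hv] : is_hilbert ipm /\ is_hilbert ipv by case: RKm; case: RKv.
rewrite /KKm /KKv (kmat_RKHS x RKm) (kmat_RKHS x RKv); split.
- exact: Pn_Pinf_value.
- exact: Pn_to_Pinf.
- exact: Pn_optimal_to_Pinf.
- case=> beta [A /(Pinf_optimal_to_Pn hm hv gamma_ge0) [alpha [B opt]]].
  by exists alpha, B; split=> //; exact: Pn_optimal_to_Pinf.
Qed.
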